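(* Let $M$ be a magma. If $M$ is graded then $M$ is semigraded, and if $M$ is semigraded then $M$ is initial.
   Context: A magma is a set $M$ with a binary operation $+$. $\mathbb{N}$ denotes the set of positive integers. A gradation of $M$ is a map $\ell: M\to\mathbb{N}$ with $\ell(x+y)=\ell(x)+\ell(y)$ for all $x,y$; $M$ is graded if it admits a gradation. $M$ is semigraded if there is a map $\mu: M\to\mathbb{N}$ with $\mu(x+y)>\mu(x)$ and $\mu(x+y)>\mu(y)$ for all $x,y\in M$. The initial part of $M$ is $\mathfrak{I}(M)=\langle M\setminus(M+M)\rangle$, the submagma generated by the indecomposable elements (those not of the form $x+y$), and $M$ is initial if $\mathfrak{I}(M)=M$. *)

From Stdlib Require Import Arith.

(* N = positive integers: maps into nat whose values are all >= 1. *)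
Definition is_gradation {M : Type} (op : M -> M -> M) (l : M -> nat) : Prop :=
  (forall x, 1 <= l x) /\ (forall x y, l (op x y) = l x + l y).

Definition graded {M : Type} (op : M -> M -> M) : Prop :=
  exists l : M -> nat, is_gradation op l.

Definition semigraded {M : Type} (op : M -> M -> M) : Prop :=
  exists mu : M -> nat, (forall x, 1 <= mu x) /\
    (forall x y, mu x < mu (op x y) /\ mu y < mu (op x y)).

Definition indecomposable {M : Type} (op : M -> M -> M) (x : M) : Prop :=
  ~ exists y z, x = op y z.

Inductive generated {M : Type} (op : M -> M -> M) (S : M -> Prop) : M -> Prop :=
  | gen_base : forall x, S x -> generated op S x
  | gen_op : forall x y, generated op S x -> generated op S y ->
                         generated op S (op x y).

Definition initial_part {M : Type} (op : M -> M -> M) : M -> Prop :=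
  generated op (indecomposable op).

Definition initial {M : Type} (op : M -> M -> M) : Prop :=
  forall x : M, initial_part op x.

From Stdlib Require Import Arith Lia Classical.

(* A gradation with values >= 1 strictly increases under the operation, so it
   is a semigradation. Along a semigradation every decomposition x = y + z
   lowers the measure, so strong induction on it writes every element as a
   finite sum of indecomposables. *)

Section Magma.

Variables (M : Type) (op : M -> M -> M).

Lemma gradation_lt_op (l : M -> nat) :
  is_gradation op l -> forall x y, l x < l (op x y) /\ l y < l (op x y).
Proof.
  intros [l_pos l_op] x y.
  rewrite l_op; pose proof (l_pos x); pose proof (l_pos y); lia.
Qed.

Lemma graded_semigraded : graded op -> semigraded op.
Proof.
  intros [l l_grad]; exists l; split.
  - exact (proj1 l_grad).
  - exact (gradation_lt_op l l_grad).
Qed.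

Lemma measure_lt_op_initial (mu : M -> nat) :
  (forall x y, mu x < mu (op x y) /\ mu y < mu (op x y)) -> initial op.
Proof.
  intros mu_lt_op x; induction x as [x IH] using (Wf_nat.induction_ltof1 M mu).
  destruct (classic (exists y z, x = op y z)) as [[y [z ->]] | x_indec].
  - destruct (mu_lt_op y z) as [lt_y lt_z].
    apply gen_op; [apply IH, lt_y | apply IH, lt_z].
  - apply gen_base; exact x_indec.
Qed.

Lemma semigraded_initial : semigraded op -> initial op.
Proof.
  intros [mu [_ mu_lt_op]]; exact (measure_lt_op_initial mu mu_lt_op).
Qed.

End Magma.

Theorem proposition4p7 (M : Type) (op : M -> M -> M) :
  (graded op -> semigraded op) /\ (semigraded op -> initial op).
Proof.
  split; [apply graded_semigraded | apply semigraded_initial].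
Qed.
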